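(* Let $G=(U,V,E)$ be a finite bipartite graph, $F\subseteq E$, and let $(E_r,E_b)$ be an $(A,C)$-free bipartition of the set $E_c$ of committed edges of $G$. Fix a non-edge $uv\in\hat{E}$ with $u\in U$, $v\in V$, and define $H_r=\{u'v'\in E_r : uv'\in E_b,\ u'v\in E_b\}$, $H_b=\{u'v'\in E_b : uv'\in E_r,\ u'v\in E_r\}$ (where $u'\in U$, $v'\in V$), $H=H_r\cup H_b$, and $E_r'=(E_r\setminus H_r)\cup H_b$, $E_b'=(E_b\setminus H_b)\cup H_r$. Then no edge in $H$ is an edge of any forbidden configuration $(A_1)$, $(A_2)$, $(B_1)$, $(B_2)$ or $(C)$ of the pair $(E_r',E_b')$.
   Context: $\hat{E}=\{xy: x\in U,\ y\in V,\ xy\notin E\}$. Two edges $u_1v_1,u_2v_2\in E$ ($u_i\in U$, $v_i\in V$) are in conflict in $G$ if $u_1v_2\notin E$ and $u_2v_1\notin E$. An edge is committed if it is in conflict with some other edge of $E$; $E_c$ is the set of committed edges. A bipartition of $E_c$ is a pair $(R,B)$ with $R\cap B=\emptyset$, $R\cup B=E_c$, $F\cap E_c\subseteq B$. For a pair $(R,B)$ of disjoint subsets of $E_c$, the forbidden configurations on vertices $u_1,u_2\in U$, $v_1,v_2\in V$ are: $(A_1)$: $u_1v_1,u_2v_2\in R$, $u_1v_2,u_2v_1\in\hat{E}$; $(A_2)$: $u_1v_1,u_2v_2\in B$, $u_1v_2,u_2v_1\in\hat{E}$; $(B_1)$: $u_1v_1,u_2v_2\in R$, $u_1v_2\in\hat{E}$,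 $u_2v_1\in B$; $(B_2)$: $u_1v_1,u_2v_2\in B$, $u_1v_2\in\hat{E}$, $u_2v_1\in R$; $(C)$: $u_1v_1,u_2v_2\in R$, $u_1v_2\in\hat{E}$, $u_2v_1\in F$. The edges of a configuration are its members of $E$ (i.e. $u_1v_1,u_2v_2$, and $u_2v_1$ when it lies in $E$). $(R,B)$ is $(A,C)$-free if it has no configuration $(A_1)$, $(A_2)$ or $(C)$. *)

From mathcomp Require Import all_boot.

Set Implicit Arguments. Unset Strict Implicit. Unset Printing Implicit Defensive.

Section Defs.
Variables (U V : finType).
Implicit Types (E F R B : {set U * V}).

Definition nonedge E (e : U * V) : bool := e \notin E.

Definition conflict E (e1 e2 : U * V) : bool :=
  [&& e1 \in E, e2 \in E, (e1.1, e2.2) \notin E & (e2.1, e1.2) \notin E].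

Definition committed E : {set U * V} :=
  [set e in E | [exists e', (e' != e) && conflict E e e']].

Definition bipartition E F R B : Prop :=
  [/\ [disjoint R & B], R :|: B = committed E & F :&: committed E \subset B].

Definition confA1 E R (u1 u2 : U) (v1 v2 : V) : Prop :=
  [/\ (u1, v1) \in R, (u2, v2) \in R, nonedge E (u1, v2) & nonedge E (u2, v1)].
Definition confA2 E B (u1 u2 : U) (v1 v2 : V) : Prop :=
  [/\ (u1, v1) \in B, (u2, v2) \in B, nonedge E (u1, v2) & nonedge E (u2, v1)].
Definition confB1 E R B (u1 u2 : U) (v1 v2 : V) : Prop :=
  [/\ (u1, v1) \in R, (u2, v2) \in R, nonedge E (u1, v2) & (u2, v1) \in B].
Definition confB2 E R B (u1 u2 : U) (v1 v2 : V) : Prop :=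
  [/\ (u1, v1) \in B, (u2, v2) \in B, nonedge E (u1, v2) & (u2, v1) \in R].
Definition confC E F R (u1 u2 : U) (v1 v2 : V) : Prop :=
  [/\ (u1, v1) \in R, (u2, v2) \in R, nonedge E (u1, v2) & (u2, v1) \in F].

Definition forbidden_config E F R B u1 u2 v1 v2 : Prop :=
  confA1 E R u1 u2 v1 v2 \/ confA2 E B u1 u2 v1 v2 \/ confB1 E R B u1 u2 v1 v2 \/
  confB2 E R B u1 u2 v1 v2 \/ confC E F R u1 u2 v1 v2.

Definition AC_free E F R B : Prop :=
  forall u1 u2 v1 v2,
    [/\ ~ confA1 E R u1 u2 v1 v2, ~ confA2 E B u1 u2 v1 v2 & ~ confC E F R u1 u2 v1 v2].

Definition config_edge E (u1 u2 : U) (v1 v2 : V) (e : U * V) : Prop :=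
  e = (u1, v1) \/ e = (u2, v2) \/ (e = (u2, v1) /\ (u2, v1) \in E).

Definition Hr R B (u : U) (v : V) : {set U * V} :=
  [set e in R | ((u, e.2) \in B) && ((e.1, v) \in B)].
Definition Hb R B (u : U) (v : V) : {set U * V} :=
  [set e in B | ((u, e.2) \in R) && ((e.1, v) \in R)].
Definition Hset R B u v : {set U * V} := Hr R B u v :|: Hb R B u v.
Definition Er' R B u v : {set U * V} := (R :\: Hr R B u v) :|: Hb R B u v.
Definition Eb' R B u v : {set U * V} := (B :\: Hb R B u v) :|: Hr R B u v.

End Defs.

From mathcomp Require Import all_boot.

Set Implicit Arguments. Unset Strict Implicit. Unset Printing Implicit Defensive.

(* An edge u'v' of H_r is red with both uv' and u'v blue, and dually for H_b.
   If such an edge lay in a forbidden configuration of the recoloured pair,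
   combining the configuration with these witness edges and with a conflict
   partner (by A-freeness, a committed edge of one colour conflicts with an
   edge of the other colour) and deciding which of the resulting pairs are
   edges, hence committed, hence coloured, produces an (A_1), (A_2) or (C)
   configuration of (E_r, E_b) or makes uv an edge.  Exchanging the colours
   exchanges H_r with H_b, (A_1) with (A_2) and (B_1) with (B_2), so only the
   configuration (C) needs a separate treatment of H_b. *)

Definition AB_config (U V : finType) (E R B : {set U * V}) u1 u2 v1 v2 : Prop :=
  [\/ confA1 E R u1 u2 v1 v2, confA2 E B u1 u2 v1 v2,
      confB1 E R B u1 u2 v1 v2 | confB2 E R B u1 u2 v1 v2].

Lemma forbidden_config_AB_or_C (U V : finType) (E F R B : {set U * V}) u1 u2 v1 v2 :
  forbidden_config E F R B u1 u2 v1 v2 ->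
  AB_config E R B u1 u2 v1 v2 \/ confC E F R u1 u2 v1 v2.
Proof.
by case=> [c | [c | [c | [c | c]]]];
  [left; apply: Or41 | left; apply: Or42 | left; apply: Or43 | left; apply: Or44 | right].
Qed.

Lemma AB_config_swap (U V : finType) (E R B : {set U * V}) u1 u2 v1 v2 :
  AB_config E R B u1 u2 v1 v2 -> AB_config E B R u1 u2 v1 v2.
Proof. by case=> c; [apply: Or42 | apply: Or41 | apply: Or44 | apply: Or43]. Qed.

Section Recolouring.

Variables (U V : finType) (E R B : {set U * V}) (u : U) (v : V).
Hypotheses (RB_committed : R :|: B = committed E) (RB_disjoint : [disjoint R & B])
  (noA1 : forall u1 u2 v1 v2, ~ confA1 E R u1 u2 v1 v2)
  (noA2 : forall u1 u2 v1 v2, ~ confA2 E B u1 u2 v1 v2)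
  (uv_nonedge : (u, v) \notin E).

Lemma committed_sub e : e \in committed E -> e \in E.
Proof. by rewrite inE => /andP[]. Qed.

Lemma R_sub e : e \in R -> e \in E.
Proof. by move=> eR; apply: committed_sub; rewrite -RB_committed inE eR. Qed.

Lemma B_sub e : e \in B -> e \in E.
Proof. by move=> eB; apply: committed_sub; rewrite -RB_committed inE eB orbT. Qed.

Lemma RB_excl e : e \in R -> e \in B -> False.
Proof. by move=> eR; rewrite (disjointFr RB_disjoint eR). Qed.

Lemma crossing_committed a b c d :
  (a, b) \in E -> (c, d) \in E -> (a, d) \notin E -> (c, b) \notin E ->
  (a, b) \in committed E.
Proof.
move=> abE cdE adE cbE; rewrite inE abE; apply/existsP; exists (c, d).
rewrite /conflict abE cdE adE cbE !andbT /=.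
by apply: contraNneq adE => -[_ ->].
Qed.

Lemma crossing_notB_R a b c d :
  (a, b) \in E -> (c, d) \in E -> (a, d) \notin E -> (c, b) \notin E ->
  (a, b) \notin B -> (a, b) \in R.
Proof.
move=> abE cdE adE cbE /negbTE abB.
by move: (crossing_committed abE cdE adE cbE); rewrite -RB_committed inE abB orbF.
Qed.

Lemma crossing_notR_B a b c d :
  (a, b) \in E -> (c, d) \in E -> (a, d) \notin E -> (c, b) \notin E ->
  (a, b) \notin R -> (a, b) \in B.
Proof.
move=> abE cdE adE cbE /negbTE abR.
by move: (crossing_committed abE cdE adE cbE); rewrite -RB_committed inE abR.
Qed.

Lemma R_cross a b c d : (a, b) \in R -> (c, d) \in R -> (a, d) \notin E -> (c, b) \in E.
Proof. by move=> abR cdR adE; apply/negPn/negP => cbE; apply: (noA1 (And4 abR cdR adE cbE)). Qed.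

Lemma B_cross a b c d : (a, b) \in B -> (c, d) \in B -> (a, d) \notin E -> (c, b) \in E.
Proof. by move=> abB cdB adE; apply/negPn/negP => cbE; apply: (noA2 (And4 abB cdB adE cbE)). Qed.

Lemma R_conflict_partner_B a b : (a, b) \in R ->
  exists x y, [/\ (x, y) \in B, (a, y) \notin E & (x, b) \notin E].
Proof.
move=> abR; have : (a, b) \in committed E by rewrite -RB_committed inE abR.
rewrite inE => /andP[_ /existsP[[x y] /andP[_ /and4P[_ xyE ayE xbE]]]].
exists x, y; split => //; apply: (crossing_notR_B xyE (R_sub abR)) => //.
by apply/negP => xyR; apply: (negP xbE); apply: R_cross abR xyR ayE.
Qed.

Lemma Er'_notin_Hr e : e \in Er' R B u v -> e \notin Hr R B u v.
Proof.
rewrite in_setU in_setD => /orP[/andP[-> _] // |].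
by rewrite !inE => /andP[eB _]; apply/negP => /andP[eR _]; apply: RB_excl eR eB.
Qed.

Lemma Hr_notin_A2 u1 u2 v1 v2 :
  (u1, v1) \in Hr R B u v -> (u2, v2) \in Eb' R B u v ->
  (u1, v2) \notin E -> (u2, v1) \notin E -> False.
Proof.
rewrite in_setU in_setD !inE /= => /and3P[r11 bu1 b1v].
case/orP=> [/andP[nHb b22] | /and3P[r22 _ _]] h12 h21; last first.
  exact: (negP h21) (R_cross r11 r22 h12).
have ruv2 : (u, v2) \in R.
  apply: (crossing_notB_R (B_cross b22 bu1 h21) (B_sub b1v)) => //.
  by apply/negP => b; apply: (negP uv_nonedge) (B_cross b1v b h12).
have ru2v : (u2, v) \in R.
  apply: (crossing_notB_R (B_cross b1v b22 h12) (B_sub bu1)) => //.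
  by apply/negP => b; apply: (negP h21) (B_cross bu1 b uv_nonedge).
by move: nHb; rewrite b22 ruv2 ru2v.
Qed.

Lemma Hr_notin_B1_cross u1 u2 v1 v2 :
  (u2, v1) \in Hr R B u v -> (u1, v1) \in Er' R B u v -> (u2, v2) \in Er' R B u v ->
  (u1, v2) \notin E -> False.
Proof.
rewrite !in_setU !in_setD !inE /= => /and3P[r21 bu1 b2v].
case/orP=> [/andP[nHr1 r11] | /and3P[_ r _]]; last by case: (RB_excl r bu1).
case/orP=> [/andP[nHr2 r22] | /and3P[_ _ r]]; last by case: (RB_excl r b2v).
move=> h12.
have nb1 : (u1, v) \notin B by apply/negP => b; move: nHr1; rewrite r11 bu1 b.
have nb2 : (u, v2) \notin B by apply/negP => b; move: nHr2; rewrite r22 b b2v.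
have [x [y [bxy h2y hx1]]] := R_conflict_partner_B r21.
have rxv : (x, v) \in R.
  apply: (crossing_notB_R (B_cross b2v bxy h2y) (B_sub bu1)) => //.
  by apply/negP => b; apply: (negP uv_nonedge) (B_cross b bu1 hx1).
have ruy : (u, y) \in R.
  apply: (crossing_notB_R (B_cross bxy bu1 hx1) (B_sub b2v)) => //.
  by apply/negP => b; apply: (negP h2y) (B_cross b b2v uv_nonedge).
have ru1v : (u1, v) \in R.
  exact: crossing_notB_R (R_cross rxv r11 hx1) (R_cross r22 ruy h2y) _ _ nb1.
have ruv2 : (u, v2) \in R.
  exact: crossing_notB_R (R_cross r22 ruy h2y) (R_cross rxv r11 hx1) _ _ nb2.
exact: (negP uv_nonedge) (R_cross ru1v ruv2 h12).
Qed.

Lemma Hr_notin_B2_first u1 u2 v1 v2 :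
  (u1, v1) \in Hr R B u v -> (u2, v2) \in Eb' R B u v -> (u1, v2) \notin E ->
  (u2, v1) \in Er' R B u v -> False.
Proof.
rewrite !in_setU !in_setD !inE /= => /and3P[r11 bu1 b1v].
case/orP=> [/andP[nHb22 b22] | /and3P[_ b _]] h12; last first.
  by move=> _; apply: (negP uv_nonedge) (B_cross b1v b h12).
case/orP=> [/andP[nHr21 r21] | /and3P[_ r _]]; last by case: (RB_excl r bu1).
have nb2v : (u2, v) \notin B by apply/negP => b; move: nHr21; rewrite r21 bu1 b.
have [x [y [bxy h2y hx1]]] := R_conflict_partner_B r21.
have ru2v : (u2, v) \in R.
  exact: crossing_notB_R (B_cross b1v b22 h12) (B_cross bxy bu1 hx1) _ _ nb2v.
have buy : (u, y) \in B.
  apply: (crossing_notR_B (B_cross bxy bu1 hx1) (R_sub ru2v)) => //.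
  by apply/negP => r; apply: (negP h2y) (R_cross r ru2v uv_nonedge).
have nruv2 : (u, v2) \notin R by apply/negP => r; move: nHb22; rewrite b22 r ru2v.
have uv2_nonedge : (u, v2) \notin E.
  apply/negP => uv2E.
  have b : (u, v2) \in B by apply: (crossing_notR_B uv2E (B_sub b1v)).
  exact: (negP uv_nonedge) (B_cross b1v b h12).
exact: (negP h2y) (B_cross buy b22 uv2_nonedge).
Qed.

Lemma Hr_notin_B2_second u1 u2 v1 v2 :
  (u2, v2) \in Hr R B u v -> (u1, v1) \in Eb' R B u v -> (u1, v2) \notin E ->
  (u2, v1) \in Er' R B u v -> False.
Proof.
rewrite !in_setU !in_setD !inE /= => /and3P[r22 bu2 b2v] in11 h12.
case/orP=> [/andP[nHr21 r21] | /and3P[_ _ r]]; last by case: (RB_excl r b2v).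
have nbu1 : (u, v1) \notin B by apply/negP => b; move: nHr21; rewrite r21 b b2v.
case/orP: in11 => [/andP[nHb11 b11] | /and3P[_ b _]]; last by rewrite b in nbu1.
have [x [y [bxy h2y hx1]]] := R_conflict_partner_B r21.
have ruv1 : (u, v1) \in R.
  exact: crossing_notB_R (B_cross b11 bu2 h12) (B_cross b2v bxy h2y) _ _ nbu1.
have bxv : (x, v) \in B.
  apply: (crossing_notR_B (B_cross b2v bxy h2y) (R_sub ruv1)) => //.
  by apply/negP => r; apply: (negP uv_nonedge) (R_cross r ruv1 hx1).
have nru1v : (u1, v) \notin R by apply/negP => r; move: nHb11; rewrite b11 ruv1 r.
have u1v_nonedge : (u1, v) \notin E.
  apply/negP => u1vE.
  have b : (u1, v) \in B by apply: (crossing_notR_B u1vE (B_sub bu2)).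
  exact: (negP uv_nonedge) (B_cross b bu2 h12).
exact: (negP hx1) (B_cross b11 bxv u1v_nonedge).
Qed.

Lemma AB_config_edge_notin_Hr u1 u2 v1 v2 e :
  AB_config E (Er' R B u v) (Eb' R B u v) u1 u2 v1 v2 ->
  config_edge E u1 u2 v1 v2 e -> e \notin Hr R B u v.
Proof.
case=> -[h11 h22 h12 h21] [-> | [-> | [-> h21E]]];
  try by [apply: Er'_notin_Hr | rewrite /nonedge h21E in h21]; apply/negP => H.
- exact: Hr_notin_A2 H h22 h12 h21.
- exact: Hr_notin_A2 H h11 h21 h12.
- exact: Hr_notin_B1_cross H h11 h22 h12.
- exact: Hr_notin_B2_first H h22 h12 h21.
- exact: Hr_notin_B2_second H h11 h12 h21.
Qed.

Variable F : {set U * V}.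
Hypotheses (F_committed_B : F :&: committed E \subset B)
  (noC : forall u1 u2 v1 v2, ~ confC E F R u1 u2 v1 v2).

Lemma F_notin_R e : e \in F -> e \in R -> False.
Proof.
move=> eF eR; have eFC : e \in F :&: committed E by rewrite inE eF -RB_committed inE eR.
exact: RB_excl eR (subsetP F_committed_B e eFC).
Qed.

Lemma C_cross a b c d : (a, b) \in R -> (c, d) \in R -> (c, b) \in F -> (a, d) \in E.
Proof. by move=> abR cdR cbF; apply/negPn/negP => adE; apply: (noC (And4 abR cdR adE cbF)). Qed.

Lemma Hb_notin_C_first u1 u2 v1 v2 :
  (u1, v1) \in Hb R B u v -> (u2, v2) \in Er' R B u v -> (u1, v2) \notin E ->
  (u2, v1) \in F -> False.
Proof.
rewrite !in_setU !in_setD !inE /= => /and3P[b11 ru1 r1v].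
case/orP=> [/andP[nHr22 r22] | /and3P[_ r _]] h12 f21; last first.
  exact: (negP uv_nonedge) (R_cross r1v r h12).
have buv2 : (u, v2) \in B.
  apply: (crossing_notR_B (C_cross ru1 r22 f21) (R_sub r1v)) => //.
  by apply/negP => r; apply: (negP uv_nonedge) (R_cross r1v r h12).
have nb2v : (u2, v) \notin B by apply/negP => b; move: nHr22; rewrite r22 buv2 b.
have [x [y [bxy h2y hx2]]] := R_conflict_partner_B r22.
have ru2v : (u2, v) \in R.
  exact: crossing_notB_R (R_cross r1v r22 h12) (B_cross bxy buv2 hx2) _ _ nb2v.
exact: (negP uv_nonedge) (C_cross ru1 ru2v f21).
Qed.

Lemma Hb_notin_C_second u1 u2 v1 v2 :
  (u2, v2) \in Hb R B u v -> (u1, v1) \in Er' R B u v -> (u1, v2) \notin E ->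
  (u2, v1) \in F -> False.
Proof.
rewrite !in_setU !in_setD !inE /= => /and3P[b22 ru2 r2v].
case/orP=> [/andP[nHr11 r11] | /and3P[_ _ r]] h12 f21; last first.
  exact: (negP uv_nonedge) (R_cross r ru2 h12).
have bu1v : (u1, v) \in B.
  apply: (crossing_notR_B (C_cross r11 r2v f21) (R_sub ru2)) => //.
  by apply/negP => r; apply: (negP uv_nonedge) (R_cross r ru2 h12).
have nbu1 : (u, v1) \notin B by apply/negP => b; move: nHr11; rewrite r11 b bu1v.
have [x [y [bxy h1y hx1]]] := R_conflict_partner_B r11.
have ruv1 : (u, v1) \in R.
  exact: crossing_notB_R (R_cross r11 ru2 h12) (B_cross bu1v bxy h1y) _ _ nbu1.
exact: (negP uv_nonedge) (C_cross ruv1 r2v f21).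
Qed.

Lemma C_config_edge_notin_H u1 u2 v1 v2 e :
  confC E F (Er' R B u v) u1 u2 v1 v2 ->
  config_edge E u1 u2 v1 v2 e -> e \notin Hset R B u v.
Proof.
case=> h11 h22 h12 f21 [-> | [-> | [-> _]]]; rewrite in_setU negb_or.
- rewrite Er'_notin_Hr //=; apply/negP => H; exact: Hb_notin_C_first H h22 h12 f21.
- rewrite Er'_notin_Hr //=; apply/negP => H; exact: Hb_notin_C_second H h11 h12 f21.
- rewrite !inE /=; apply/andP; split; apply/negP.
    by case/and3P=> r _ _; apply: F_notin_R f21 r.
  by case/and3P=> _ ru1 r2v; apply: (negP uv_nonedge) (C_cross ru1 r2v f21).
Qed.

End Recolouring.

Theorem lemma2 (U V : finType) (E F Er Eb : {set U * V}) (u : U) (v : V) :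
  F \subset E ->
  bipartition E F Er Eb ->
  AC_free E F Er Eb ->
  nonedge E (u, v) ->
  forall (u1 u2 : U) (v1 v2 : V) (e : U * V),
    forbidden_config E F (Er' Er Eb u v) (Eb' Er Eb u v) u1 u2 v1 v2 ->
    config_edge E u1 u2 v1 v2 e ->
    e \notin Hset Er Eb u v.
Proof.
move=> _ [disj com FB] ACfree uvE u1 u2 v1 v2 e conf edge.
have noA1 a c b d : ~ confA1 E Er a c b d by case: (ACfree a c b d).
have noA2 a c b d : ~ confA2 E Eb a c b d by case: (ACfree a c b d).
have noC a c b d : ~ confC E F Er a c b d by case: (ACfree a c b d).
have com' : Eb :|: Er = committed E by rewrite setUC.
have disj' : [disjoint Eb & Er] by rewrite disjoint_sym.
case/forbidden_config_AB_or_C: conf => [AB | C].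
  rewrite in_setU negb_or (AB_config_edge_notin_Hr com disj noA1 noA2 uvE AB edge) /=.
  (* [Er' Eb Er], [Eb' Eb Er] and [Hr Eb Er] unfold to [Eb' Er Eb], [Er' Er Eb] and [Hb Er Eb]. *)
  exact: (AB_config_edge_notin_Hr com' disj' noA2 noA1 uvE (AB_config_swap AB) edge).
exact: (C_config_edge_notin_H com disj noA1 noA2 uvE FB noC C edge).
Qed.
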